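(* Let $C>0$, let $l$ be a mostly horizontal inclined to the right line, and let $I$ be an image of width $w$. Then $N(I\cap s(l,C))\leqslant(2C\sqrt2+1)\,w$.
   Context: An image of width $w$ and height $h$ is identified with the set of integer points $(x,y)$, $x\in\{0,\dots,w-1\}$, $y\in\{0,\dots,h-1\}$. For a line $l$ and $C>0$, $s(l,C)=\{r\in\mathbb{R}^2\mid\rho(r,l)\leqslant C/2\}$, $\rho$ the Euclidean distance. A line is mostly horizontal inclined to the right if it has equation $y=ax+b$ with $0\leqslant a\leqslant1$. For $D\subseteq\mathbb{R}^2$, $N(D)=|\mathbb{Z}^2\cap D|$. *)

From mathcomp Require Import all_boot all_order all_algebra.
From mathcomp Require Import all_classical all_reals.
Set Implicit Arguments. Unset Strict Implicit. Unset Printing Implicit Defensive.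
Import Order.TTheory GRing.Theory Num.Theory.
Local Open Scope classical_set_scope.
Local Open Scope ring_scope.

Definition edist {R : realType} (p q : R * R) : R :=
  Num.sqrt ((p.1 - q.1) ^+ 2 + (p.2 - q.2) ^+ 2).

Definition line_pts {R : realType} (a b : R) : set (R * R) :=
  [set q | q.2 = a * q.1 + b].

Definition dist_to_line {R : realType} (a b : R) (r : R * R) : R :=
  inf [set edist r q | q in line_pts a b].

Definition strip {R : realType} (a b C : R) : set (R * R) :=
  [set r | dist_to_line a b r <= C / 2].

(* the image of width w and height h: integer points (x, y), x < w, y < h.
   N(I ∩ D) = number of such points lying in D. *)
Definition N_image {R : realType} (w h : nat) (D : set (R * R)) : nat :=
  #|[set p : 'I_w * 'I_h | `[< D ((p.1 : nat)%:R, (p.2 : nat)%:R) >] ]|.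

(** A point at Euclidean distance at most C/2 from the line y = a x + b is at
    vertical distance at most (1 + a) C/2 <= C from it, so each of the w columns
    of the image meets the strip in at most 2C + 1 integer points; and
    2C + 1 <= 2C sqrt 2 + 1. *)
From mathcomp Require Import all_boot all_order all_algebra.
From mathcomp Require Import all_classical all_reals.
From mathcomp Require Import ring lra zify.
Set Implicit Arguments.
Unset Strict Implicit.
Unset Printing Implicit Defensive.

Import Order.TTheory GRing.Theory Num.Theory.
Local Open Scope ring_scope.

Section LineStrip.
Variable R : realType.

Lemma edist_ge_norm1 (p q : R * R) : `|p.1 - q.1| <= edist p q.
Proof.
by rewrite /edist -(sqrtr_sqr (p.1 - q.1)) ler_wsqrtr // lerDl sqr_ge0.
Qed.

Lemma edist_ge_norm2 (p q : R * R) : `|p.2 - q.2| <= edist p q.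
Proof.
by rewrite /edist -(sqrtr_sqr (p.2 - q.2)) ler_wsqrtr // lerDr sqr_ge0.
Qed.

Lemma vertical_dist_le_dist_to_line (a b : R) (r : R * R) :
  `|r.2 - (a * r.1 + b)| <= (1 + `|a|) * dist_to_line a b r.
Proof.
have a1_gt0 : 0 < 1 + `|a| by rewrite ltr_pwDl.
rewrite -ler_pdivrMl // /dist_to_line; apply: lb_le_inf.
  by exists (edist r (0, b)), (0, b) => //; rewrite /line_pts /= mulr0 add0r.
move=> _ [q /= q_on_l <-]; rewrite ler_pdivrMl //.
have -> : r.2 - (a * r.1 + b) = (r.2 - q.2) - a * (r.1 - q.1) by rewrite q_on_l; ring.
rewrite (le_trans (ler_normB _ _)) // normrM mulrDl mul1r.
by rewrite lerD ?edist_ge_norm2 ?ler_wpM2l ?edist_ge_norm1.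
Qed.

Lemma strip_vertical_dist_le (a b C : R) (r : R * R) :
  0 <= C -> 0 <= a -> a <= 1 -> strip a b C r -> `|r.2 - (a * r.1 + b)| <= C.
Proof.
move=> C_ge0 a_ge0 a_le1 r_in_s.
apply: le_trans (vertical_dist_le_dist_to_line a b r) _.
have : (1 + `|a|) * dist_to_line a b r <= (1 + `|a|) * (C / 2).
  by rewrite ler_wpM2l // addr_ge0.
rewrite ger0_norm //; nra.
Qed.

End LineStrip.

Lemma card_le_of_bounded (n lo hi : nat) (S : {pred 'I_n}) :
  (forall y, y \in S -> lo <= y <= hi)%N -> (#|S| <= (hi - lo).+1)%N.
Proof.
move=> S_bounded; rewrite cardE -(size_map val) -(size_iota lo (hi - lo).+1).
apply: uniq_leq_size; first by rewrite map_inj_uniq ?enum_uniq //; apply: val_inj.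
move=> _ /mapP[y + ->]; rewrite mem_enum mem_iota => /S_bounded /=; lia.
Qed.

Lemma card_near_le (R : realType) (n : nat) (c C : R) (S : {pred 'I_n}) :
  0 <= C -> (forall y, y \in S -> `|(y : nat)%:R - c| <= C) ->
  (#|S|%:R : R) <= 2 * C + 1.
Proof.
move=> C_ge0 S_near.
case: (pickP (mem S)) => [y0 y0S | S0]; last by rewrite eq_card0 //; lra.
case: (arg_minnP (fun y : 'I_n => (y : nat)) y0S) => lo loS lo_min.
case: (arg_maxnP (fun y : 'I_n => (y : nat)) y0S) => hi hiS hi_max.
have lo_le_hi : (lo <= hi)%N by apply: lo_min.
have card_le : (#|S| <= (hi - lo).+1)%N.
  by apply: card_le_of_bounded => y yS; rewrite lo_min //; apply: hi_max.
apply: le_trans (_ : ((hi - lo).+1%:R : R) <= _); first by rewrite ler_nat.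
rewrite -addn1 natrD natrB //.
move: (S_near _ loS) (S_near _ hiS); rewrite !ler_norml => /andP[? ?] /andP[? ?].
lra.
Qed.

Lemma card_sum_fibers (T1 T2 : finType) (A : {pred T1 * T2}) :
  #|A| = (\sum_(x : T1) #|[pred y | (x, y) \in A]|)%N.
Proof.
rewrite -sum1_card; under [RHS]eq_bigr => x _ do rewrite -sum1_card.
by rewrite pair_big_dep; apply: eq_bigl => -[x y].
Qed.

Theorem proposition13 (R : realType) (C a b : R) (w h : nat) :
  0 < C -> 0 <= a -> a <= 1 ->
  ((N_image w h (strip a b C))%:R : R) <= (2 * C * Num.sqrt 2 + 1) * w%:R.
Proof.
move=> C_gt0 a_ge0 a_le1; rewrite /N_image card_sum_fibers natr_sum.
apply: (@le_trans _ _ (\sum_(x < w) (2 * C + 1))).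
  apply: ler_sum => x _; apply: (card_near_le (c := a * (x : nat)%:R + b)).
    exact: ltW.
  move=> y; rewrite !inE => /asboolP.
  exact: (strip_vertical_dist_le (ltW C_gt0)).
rewrite sumr_const card_ord -[_ *+ w]mulr_natr ler_wpM2r // lerD2r.
have sqrt2_ge1 : 1 <= Num.sqrt (2 : R).
  by rewrite -[X in X <= _]sqrtr1 ler_wsqrtr //; lra.
by rewrite -mulrA ler_wpM2l ?ler_peMr // ltW.
Qed.
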